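(* Let $\phi=\phi_{\mathrm{NH}}$, $\phi_{\mathrm{NH}}(y,t)=t^{-1/2}\exp(y^2/(2t))$, and $\Phi(\boldsymbol x,t)=\sum_{i=1}^N\phi(x_i,t)$. Then for all $\boldsymbol x\in\mathbb{R}^N$ and $t>0$, $$\mathrm{DErr}_\Phi(\boldsymbol x,t)\le\frac{\max_i x_i^2/t+4}{4t}.$$
   Context: $\mathrm{DErr}_\Phi(\boldsymbol x,t):=\dfrac{\sum_{i=1}^N\frac{\partial^4}{\partial x^4}\phi(x_i,t)}{4\sum_{i=1}^N\partial_{xx}\phi(x_i,t)}-\dfrac{1}{4\Phi(\boldsymbol x,t)}\sum_{i=1}^N\partial_{xx}\phi(x_i,t)$, where derivatives are in the first argument of $\phi$. *)

From Stdlib Require Import Reals Lra.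
From Coquelicot Require Import Coquelicot.
Open Scope R_scope.

Definition phi_NH (y t : R) : R := / sqrt t * exp (y ^ 2 / (2 * t)).

Definition dphi (k : nat) (y t : R) : R := Derive_n (fun z => phi_NH z t) k y.

(* Sum over i = 0 .. N-1 of f i  (N components of x : nat -> R) *)
Definition sumN (N : nat) (f : nat -> R) : R := sum_n_m f 0 (N - 1).

Definition Phi (N : nat) (x : nat -> R) (t : R) : R :=
  sumN N (fun i => phi_NH (x i) t).

Definition DErr (N : nat) (x : nat -> R) (t : R) : R :=
  sumN N (fun i => dphi 4 (x i) t) / (4 * sumN N (fun i => dphi 2 (x i) t))
  - / (4 * Phi N x t) * sumN N (fun i => dphi 2 (x i) t).

(* max_{0 <= i < N} f i, for N >= 1 *)
Fixpoint maxIdx (N : nat) (f : nat -> R) : R :=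
  match N with
  | O => 0
  | S O => f O
  | S n => Rmax (maxIdx n f) (f n)
  end.

(** With [u = y^2/t], the derivatives of [phi_NH] in [y] are
    [phi'' = (1 + u)/t * phi] and [phi'''' = (3 + 6u + u^2)/t^2 * phi].
    Hence termwise [phi'' >= phi/t], and, when [u <= M],
    [phi'''' <= (M + 5)/t * phi''] because [3 + 6u + u^2 <= (M + 5)(1 + u)].
    Summing over the coordinates, the first quotient of [DErr] is at most
    [(M + 5)/(4t)] and the subtracted one at least [1/(4t)]. *)
From Stdlib Require Import Reals Lra Lia Psatz.
From Coquelicot Require Import Coquelicot.
Open Scope R_scope.

Lemma sum_n_m_le_loc (a b : nat -> R) (n m : nat) :
  (forall k, (n <= k <= m)%nat -> a k <= b k) ->
  sum_n_m a n m <= sum_n_m b n m.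
Proof.
  intros Hab.
  rewrite (sum_n_m_ext_loc b (fun k => Rmax (a k) (b k))).
  - apply sum_n_m_le; intros k; apply Rmax_l.
  - intros k Hk; symmetry; apply Rmax_right, Hab, Hk.
Qed.

Lemma sum_n_m_pos (a : nat -> R) (n m : nat) :
  (n <= m)%nat -> (forall k, 0 < a k) -> 0 < sum_n_m a n m.
Proof.
  intros Hnm Ha.
  rewrite sum_Sn_m by exact Hnm.
  assert (Hrest : sum_n_m (fun _ => zero) (S n) m <= sum_n_m a (S n) m)
    by (apply sum_n_m_le; intros k; left; apply Ha).
  rewrite sum_n_m_const_zero in Hrest.
  specialize (Ha n); unfold plus, zero in *; simpl in *; lra.
Qed.

Lemma maxIdx_ge (f : nat -> R) (n k : nat) : (k < n)%nat -> f k <= maxIdx n f.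
Proof.
  induction n as [|n IHn]; intros Hk; [lia|].
  destruct n as [|n]; [replace k with 0%nat by lia; simpl; lra|].
  change (maxIdx (S (S n)) f) with (Rmax (maxIdx (S n) f) (f (S n))).
  destruct (Nat.eq_dec k (S n)) as [->|Hne]; [apply Rmax_r|].
  eapply Rle_trans; [apply IHn; lia|apply Rmax_l].
Qed.

Section PhiDerivatives.

Variable t : R.
Hypothesis t_pos : 0 < t.

Lemma phi_NH_pos (y : R) : 0 < phi_NH y t.
Proof.
  apply Rmult_lt_0_compat; [apply Rinv_0_lt_compat, sqrt_lt_R0, t_pos|apply exp_pos].
Qed.

Lemma is_derive_phi_NH (y : R) :
  is_derive (fun z => phi_NH z t) y (y / t * phi_NH y t).
Proof.
  unfold phi_NH; auto_derive; [easy|].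
  replace (y * (y * 1) * / (2 * t)) with (y ^ 2 / (2 * t)) by (unfold Rdiv; ring).
  assert (0 < sqrt t) by now apply sqrt_lt_R0.
  field; lra.
Qed.

Lemma dphi_S (k : nat) (p p' : R -> R) :
  (forall y, is_derive p y (p' y)) ->
  (forall y, dphi k y t = p y * phi_NH y t) ->
  forall y, dphi (S k) y t = (p' y + y / t * p y) * phi_NH y t.
Proof.
  intros Hp Hk y; unfold dphi in *; simpl.
  rewrite (Derive_ext _ (fun z => p z * phi_NH z t)) by exact Hk.
  apply is_derive_unique.
  replace ((p' y + y / t * p y) * phi_NH y t)
    with (p' y * phi_NH y t + p y * (y / t * phi_NH y t)) by ring.
  exact (is_derive_mult _ _ _ _ _ (Hp y) (is_derive_phi_NH y) Rmult_comm).
Qed.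

Lemma dphi1 (y : R) : dphi 1 y t = y / t * phi_NH y t.
Proof.
  rewrite (dphi_S 0 (fun _ => 1) (fun _ => 0)); [ring| |].
  - intros z; auto_derive; easy.
  - intros z; unfold dphi; simpl; ring.
Qed.

Lemma dphi2 (y : R) : dphi 2 y t = (1 + y ^ 2 / t) / t * phi_NH y t.
Proof.
  rewrite (dphi_S 1 (fun z => z / t) (fun _ => / t)); [field; lra| |exact dphi1].
  intros z; auto_derive; [easy|field; lra].
Qed.

Lemma dphi3 (y : R) : dphi 3 y t = (3 * y / t ^ 2 + y ^ 3 / t ^ 3) * phi_NH y t.
Proof.
  rewrite (dphi_S 2 (fun z => (1 + z ^ 2 / t) / t) (fun z => 2 * z / t ^ 2));
    [field; lra| |exact dphi2].
  intros z; auto_derive; [easy|field; lra].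
Qed.

Lemma dphi4 (y : R) :
  dphi 4 y t = (3 + 6 * (y ^ 2 / t) + (y ^ 2 / t) ^ 2) / t ^ 2 * phi_NH y t.
Proof.
  rewrite (dphi_S 3 (fun z => 3 * z / t ^ 2 + z ^ 3 / t ^ 3)
                    (fun z => 3 / t ^ 2 + 3 * z ^ 2 / t ^ 3));
    [field; lra| |exact dphi3].
  intros z; auto_derive; [easy|field; lra].
Qed.

Lemma dphi2_ge (y : R) : phi_NH y t / t <= dphi 2 y t.
Proof.
  rewrite dphi2.
  assert (0 <= y ^ 2 / t) by (apply Rdiv_le_0_compat; nra).
  pose proof (phi_NH_pos y).
  replace (phi_NH y t / t) with (1 / t * phi_NH y t) by (field; lra).
  apply Rmult_le_compat_r; [lra|].
  unfold Rdiv; apply Rmult_le_compat_r; [left; apply Rinv_0_lt_compat|]; lra.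
Qed.

Lemma dphi4_le (y M : R) :
  y ^ 2 / t <= M -> dphi 4 y t <= (M + 5) / t * dphi 2 y t.
Proof.
  intros HuM; rewrite dphi4, dphi2.
  set (u := y ^ 2 / t) in *.
  assert (Hu : 0 <= u) by (apply Rdiv_le_0_compat; nra).
  assert (Hquad : 3 + 6 * u + u ^ 2 <= (M + 5) * (1 + u)) by nra.
  pose proof (phi_NH_pos y).
  replace ((M + 5) / t * ((1 + u) / t * phi_NH y t))
    with ((M + 5) * (1 + u) / t ^ 2 * phi_NH y t) by (field; lra).
  apply Rmult_le_compat_r; [lra|].
  unfold Rdiv; apply Rmult_le_compat_r; [left; apply Rinv_0_lt_compat; nra|exact Hquad].
Qed.

End PhiDerivatives.

Lemma quotient_difference_le (t S0 S2 S4 K : R) :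
  0 < t -> 0 < S0 -> S0 / t <= S2 -> S4 <= K * S2 ->
  S4 / (4 * S2) - / (4 * S0) * S2 <= (K - / t) / 4.
Proof.
  intros Ht HS0 H2 H4.
  assert (HS2 : 0 < S2) by (pose proof (Rdiv_lt_0_compat S0 t HS0 Ht); lra).
  assert (HK : S4 / (4 * S2) <= K / 4).
  { apply (Rmult_le_reg_r (4 * S2)); [lra|]. field_simplify; lra. }
  assert (Hinv : / (4 * t) <= / (4 * S0) * S2).
  { apply (Rmult_le_reg_r (4 * S0 * t)); [nra|].
    apply (Rmult_le_compat_r t) in H2; [|lra].
    field_simplify in H2; [|lra]. field_simplify; lra. }
  replace ((K - / t) / 4) with (K / 4 - / (4 * t)) by (field; lra).
  lra.
Qed.

Theorem lemma6p6 (n : nat) (x : nat -> R) (t : R) :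
  (1 <= n)%nat -> 0 < t ->
  DErr n x t <= (maxIdx n (fun i => x i ^ 2) / t + 4) / (4 * t).
Proof.
  intros Hn Ht.
  set (m := maxIdx n (fun i => x i ^ 2)).
  unfold DErr, Phi, sumN.
  replace ((m / t + 4) / (4 * t)) with (((m / t + 5) / t - / t) / 4) by (field; lra).
  apply quotient_difference_le; [exact Ht| | |].
  - apply sum_n_m_pos; [lia|intros k; now apply phi_NH_pos].
  - unfold Rdiv at 1; rewrite Rmult_comm, <- (sum_n_m_mult_l (K := R_Ring)).
    apply sum_n_m_le; intros k; rewrite Rmult_comm; now apply dphi2_ge.
  - rewrite <- (sum_n_m_mult_l (K := R_Ring)).
    apply sum_n_m_le_loc; intros k Hk; apply dphi4_le; [exact Ht|].
    unfold Rdiv; apply Rmult_le_compat_r; [left; now apply Rinv_0_lt_compat|].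
    apply (maxIdx_ge (fun i => x i ^ 2)); lia.
Qed.
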